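(* For every real $h>g^*$ one has $g(h)<h$.
   Context: Fix $p\in(0,1)$, $q\in[0,1]$, $\lambda>0$. $\mathbb{Z}_+=\{0,1,2,\dots\}$. Let $d:[0,\infty)\to\mathbb{R}$ satisfy: (C1) $d(0)>0$; (C2) $d$ is convex and increasing; (C3) for every $\delta>0$, $r\mapsto d(r+\delta)-d(r)$ increases to $\infty$ as $r\to\infty$. Write $d(x,y):=d(\sqrt{x^2+y^2})$ for $(x,y)\in\mathbb{R}^2$, and assume (C4): $d(x,y)$ is positive, twice continuously partially differentiable, with $d_{xx},d_{xy},d_{yy}>0$ for all $x,y\ge0$. Set $\Delta_1(m,n)=d(m+1,n)-d(m,n)$, $\Delta_2(m,n)=d(m,n+1)-d(m,n)$, $\Delta_q(m,n)=q\Delta_1(m,n)+(1-q)\Delta_2(m,n)$ for $(m,n)\in\mathbb{Z}_+^2$. Relay placement MDP: the state space is $\{(m,n,z):(m,n)\in\mathbb{Z}_+^2,\ z\in\{\mathsf e,\mathsf c\}\}\cup\{\phi\}$ ($(m,n)$ is the displacement of the deploying agent from the last placed relay, or from the origin if none; $z=\mathsf e$ means the lattice path has ended, $z=\mathsf c$ that it continues). Actions $u\in\{0,1\}$ ($u=1$: place a relay). From $(m,n,\mathsf c)$ with $u=0$ the next state is $(m+1,n,\mathsf c)$ w.p. $(1-p)q$, $(m+1,n,\mathsf e)$ w.p. $pq$, $(m,n+1,\mathsf c)$ w.p. $(1-p)(1-q)$, $(m,n+1,\mathsf e)$ w.p. $p(1-q)$; with $u=1$ it is $(1,0,\mathsf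 c)$, $(1,0,\mathsf e)$, $(0,1,\mathsf c)$, $(0,1,\mathsf e)$ with these same respective probabilities. At $(m,n,\mathsf e)$ only $u=1$ is allowed and the next state is the absorbing cost-free state $\phi$. One-step cost: $d(m,n)$ at $(m,n,\mathsf e)$; $\lambda+d(m,n)$ if $u=1$ at $(m,n,\mathsf c)$; $0$ otherwise. The deployment starts in state $(0,0,\mathsf c)$. $J_\lambda(m,n)$ is the optimal expected total cost (infimum over all, possibly history-dependent and randomized, policies) starting from $(m,n,\mathsf c)$, and $g^*:=J_\lambda(0,0)$. For $h\ge 0$ let $\mathcal{P}(h)=\{(m,n)\in\mathbb{Z}_+^2: p(\lambda+h)\le\Delta_q(m,n)\}$ and $\mathcal{P}^c(h)=\mathbb{Z}_+^2\setminus\mathcal{P}(h)$. Let $g(h)\in[0,\infty]$ be the expected total cost, starting from $(0,0,\mathsf c)$, of the stationary policy that in state $(m,n,\mathsf c)$ places a relay ($u=1$) if and only if $(m,n)\in\mathcal{P}(h)$. *)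

From Stdlib Require Import Reals Lra List.
Import ListNotations.
Open Scope R_scope.

Definition D2 (d : R -> R) (x y : R) : R := d (sqrt (x ^ 2 + y ^ 2)).

Definition dd (d : R -> R) (m n : nat) : R := D2 d (INR m) (INR n).

Definition C2_convex_incr (d : R -> R) : Prop :=
  (forall x y t, 0 <= x -> 0 <= y -> 0 <= t <= 1 ->
     d (t * x + (1 - t) * y) <= t * d x + (1 - t) * d y) /\
  (forall x y, 0 <= x -> x <= y -> d x <= d y).

Definition C3_incr_diff (d : R -> R) : Prop :=
  forall delta, 0 < delta ->
    (forall r1 r2, 0 <= r1 -> r1 <= r2 ->
        d (r1 + delta) - d r1 <= d (r2 + delta) - d r2) /\
    (forall M, exists R0, 0 <= R0 /\
        forall r, R0 <= r -> M < d (r + delta) - d r).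

Definition cont2 (f : R -> R -> R) (x y : R) : Prop :=
  forall eps, 0 < eps -> exists delta, 0 < delta /\
    forall x' y', Rabs (x' - x) < delta -> Rabs (y' - y) < delta ->
      Rabs (f x' y' - f x y) < eps.

Definition C4_smooth (d : R -> R) : Prop :=
  (forall x y, 0 <= x -> 0 <= y -> 0 < D2 d x y) /\
  exists dx dy dxx dxy dyx dyy : R -> R -> R,
    forall x y, 0 < x -> 0 < y ->
      derivable_pt_lim (fun t => D2 d t y) x (dx x y) /\
      derivable_pt_lim (fun t => D2 d x t) y (dy x y) /\
      derivable_pt_lim (fun t => dx t y) x (dxx x y) /\
      derivable_pt_lim (fun t => dx x t) y (dxy x y) /\
      derivable_pt_lim (fun t => dy t y) x (dyx x y) /\
      derivable_pt_lim (fun t => dy x t) y (dyy x y) /\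
      cont2 dxx x y /\ cont2 dxy x y /\ cont2 dyx x y /\ cont2 dyy x y /\
      0 < dxx x y /\ 0 < dxy x y /\ 0 < dyy x y.

Inductive Zflag : Type := Ze (* path ended *) | Zc (* path continues *).

Inductive St : Type :=
| Phi : St                          (* absorbing cost-free state *)
| Node : nat -> nat -> Zflag -> St.

Definition start : St := Node 0 0 Zc.

(* past (state, action) pairs; action true = place a relay (u = 1) *)
Definition Hist := list (St * bool).

(* general (history-dependent, randomized) policy: probability of u = 1
   given the history and the current state *)
Definition Policy := Hist -> St -> R.

Definition valid_policy (pi : Policy) : Prop :=
  forall h s, 0 <= pi h s <= 1.

Fixpoint Vcost (d : R -> R) (p q lam : R) (pi : Policy)
         (k : nat) (h : Hist) (s : St) {struct k} : R :=
  match k with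
  | O => 0
  | S k' =>
    match s with
    | Phi => 0
    | Node m n Ze => dd d m n + Vcost d p q lam pi k' (h ++ [(s, true)]) Phi
    | Node m n Zc =>
      let a := pi h s in
      let cont (hh : Hist) (a0 b0 : nat) :=
          (1 - p) * q * Vcost d p q lam pi k' hh (Node (S a0) b0 Zc)
        + p * q * Vcost d p q lam pi k' hh (Node (S a0) b0 Ze)
        + (1 - p) * (1 - q) * Vcost d p q lam pi k' hh (Node a0 (S b0) Zc)
        + p * (1 - q) * Vcost d p q lam pi k' hh (Node a0 (S b0) Ze) in
      a * (lam + dd d m n + cont (h ++ [(s, true)]) 0%nat 0%nat)
      + (1 - a) * cont (h ++ [(s, false)]) m n
    end
  end.

(* the expected total cost (sup over horizons) from (0,0,c) is <= c *)
Definition total_cost_le (d : R -> R) (p q lam : R) (pi : Policy) (c : R) : Prop :=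
  forall N, Vcost d p q lam pi N [] start <= c.

(* g^* = J_lambda(0,0) = inf over all policies of the total cost; g^* < h *)
Definition gstar_lt (d : R -> R) (p q lam h : R) : Prop :=
  exists pi, valid_policy pi /\
    exists c, c < h /\ total_cost_le d p q lam pi c.

Definition Delta1 (d : R -> R) (m n : nat) : R := dd d (S m) n - dd d m n.
Definition Delta2 (d : R -> R) (m n : nat) : R := dd d m (S n) - dd d m n.
Definition Deltaq (d : R -> R) (q : R) (m n : nat) : R :=
  q * Delta1 d m n + (1 - q) * Delta2 d m n.

Definition inP (d : R -> R) (p q lam h : R) (m n : nat) : Prop :=
  p * (lam + h) <= Deltaq d q m n.

Definition thr_policy (d : R -> R) (p q lam h : R) : Policy :=
  fun _ s =>
    match s with
    | Node m n Zc => if Rle_dec (p * (lam + h)) (Deltaq d q m n) then 1 else 0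
    | _ => 0
    end.

(* g(h) < h  (g(h) in [0,oo] is the total cost of thr_policy) *)
Definition g_lt (d : R -> R) (p q lam h : R) : Prop :=
  exists c, c < h /\ total_cost_le d p q lam (thr_policy d p q lam h) c.

From Stdlib Require Import Reals Lra Lia List Classical.
Import ListNotations.
Open Scope R_scope.

(* Three finite-horizon value functions are compared: the optimal values
   [opt_val] of the MDP (backward induction; a lower bound on the cost of any
   policy), the optimal values [stop_val] of the stopping problem in which a
   placement ends the problem at cost [lam + h + d], and the truncated values
   [thr_val] of the threshold rule of P(h) in that stopping problem.
   Convexity of d and positivity of the mixed partial d_xy make the lattice
   increments Delta_q nondecreasing, so P(h) is an up-set; hence the threshold
   rule solves the stopping problem up to an error of order (1-p)^K.  If its
   value after a restart never dropped below h, the optimal start costs would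
   tend to h (the errors decay like (1-p)^K K^2), contradicting a policy of
   cost c < h.  So some truncation yields a restart value M < h; such an M is
   self-consistent and bounds the cost of the threshold policy from the start
   at every horizon, whence g(h) <= M < h. *)

Section CostGeometry.

Variable d : R -> R.
Hypothesis HC2 : C2_convex_incr d.
Hypothesis HC4 : C4_smooth d.

Lemma D2_mono x x' y y' : 0 <= x -> x <= x' -> 0 <= y -> y <= y' ->
  D2 d x y <= D2 d x' y'.
Proof.
  intros Hx Hxx' Hy Hyy'. destruct HC2 as [_ Hmono]. unfold D2.
  apply Hmono; [apply sqrt_pos|apply sqrt_le_1_alt; nra].
Qed.

Lemma D2_comm x y : D2 d x y = D2 d y x.
Proof. unfold D2. now rewrite Rplus_comm. Qed.

Lemma dd_nonneg m n : 0 <= dd d m n.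
Proof. destruct HC4 as [Hpos _]. left. apply Hpos; apply pos_INR. Qed.

Lemma convex_small_step a s : 0 <= a -> 0 <= s <= 1 ->
  d (a + s) - d a <= s * (d (a + 1) - d a).
Proof.
  intros Ha Hs. destruct HC2 as [Hconv _].
  assert (H := Hconv a (a + 1) (1 - s) Ha ltac:(lra) ltac:(lra)).
  replace ((1 - s) * a + (1 - (1 - s)) * (a + 1)) with (a + s) in H by ring. lra.
Qed.

Lemma convex_midpoint a b c : 0 <= a -> 0 <= b -> 0 <= c ->
  2 * b <= a + c -> 2 * d b <= d a + d c.
Proof.
  intros Ha Hb Hc Habc. destruct HC2 as [Hconv Hmono].
  assert (H1 := Hconv a c (1/2) Ha Hc ltac:(lra)).
  assert (d b <= d (1/2 * a + (1 - 1/2) * c)) by (apply Hmono; lra). lra.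
Qed.

(* Strict positivity of the mixed partial [d_xy] makes the mixed difference
   of [D2 d] over any rectangle in the open quadrant nonnegative (two
   applications of the mean value theorem). *)
Lemma D2_mixed_diff_open a b c e : 0 < a < b -> 0 < c < e ->
  0 <= D2 d b e - D2 d a e - D2 d b c + D2 d a c.
Proof.
  intros Hab Hce. destruct HC4 as [_ [dx [dy [dxx [dxy [dyx [dyy H]]]]]]].
  assert (Hdx_incr : forall x, 0 < x -> 0 < dx x e - dx x c).
  { intros x Hx.
    destruct (MVT_cor2 (fun t => dx x t) (fun t => dxy x t) c e ltac:(lra))
      as [xi [Hxi Hxi_in]].
    - intros t Ht. apply (H x t Hx ltac:(lra)).
    - assert (0 < dxy x xi) by (apply (H x xi Hx ltac:(lra))). rewrite Hxi. nra. }
  destruct (MVT_cor2 ((fun t => D2 d t e) - (fun t => D2 d t c))%F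
              (fun t => dx t e - dx t c) a b ltac:(lra)) as [xi [Hxi Hxi_in]].
  - intros t Ht. apply derivable_pt_lim_minus.
    + apply (H t e ltac:(lra) ltac:(lra)).
    + apply (H t c ltac:(lra) ltac:(lra)).
  - unfold minus_fct in Hxi.
    assert (0 < dx xi e - dx xi c) by (apply Hdx_incr; lra). nra.
Qed.

(* Moving diagonally by [t] from [(x0,y0)] moves the radius by at most [2t];
   hence [D2 d] grows by at most [2t] times a unit radial step. *)
Lemma D2_diag_step x0 y0 t : 0 <= x0 -> 0 <= y0 -> 0 <= t -> 2 * t <= 1 ->
  D2 d (x0 + t) (y0 + t) - D2 d x0 y0
  <= 2 * t * (d (sqrt (x0 ^ 2 + y0 ^ 2) + 1) - d (sqrt (x0 ^ 2 + y0 ^ 2))).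
Proof.
  intros Hx Hy Ht Ht1. set (r0 := sqrt (x0 ^ 2 + y0 ^ 2)).
  assert (Hr0 : 0 <= r0) by apply sqrt_pos.
  assert (Hr0sq : r0 ^ 2 = x0 ^ 2 + y0 ^ 2) by (apply pow2_sqrt; nra).
  assert (Hr0x : x0 <= r0) by (rewrite <- (sqrt_pow2 x0 Hx); apply sqrt_le_1_alt; nra).
  assert (Hr0y : y0 <= r0) by (rewrite <- (sqrt_pow2 y0 Hy); apply sqrt_le_1_alt; nra).
  assert (Hrad : sqrt ((x0 + t) ^ 2 + (y0 + t) ^ 2) <= r0 + 2 * t).
  { rewrite <- (sqrt_pow2 (r0 + 2 * t)) by lra. apply sqrt_le_1_alt.
    assert (0 <= t * (r0 - x0)) by (apply Rmult_le_pos; lra).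
    assert (0 <= t * (r0 - y0)) by (apply Rmult_le_pos; lra). nra. }
  assert (Hmono : D2 d (x0 + t) (y0 + t) <= d (r0 + 2 * t))
    by (destruct HC2 as [_ Hm]; apply Hm; [apply sqrt_pos|exact Hrad]).
  assert (Hstep := convex_small_step r0 (2 * t) Hr0 ltac:(lra)).
  unfold D2 at 2. fold r0. lra.
Qed.

(* The mixed difference over a unit square of the closed quadrant is
   nonnegative: approximate it by the open rectangle [x0+t,x0+1]x[y0+t,y0+1]
   and let [t] go to 0 using [D2_diag_step]. *)
Lemma D2_mixed_diff x0 y0 : 0 <= x0 -> 0 <= y0 ->
  0 <= D2 d (x0 + 1) (y0 + 1) - D2 d x0 (y0 + 1) - D2 d (x0 + 1) y0 + D2 d x0 y0.
Proof.
  intros Hx Hy.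
  set (T := D2 d (x0 + 1) (y0 + 1) - D2 d x0 (y0 + 1) - D2 d (x0 + 1) y0 + D2 d x0 y0).
  set (K := d (sqrt (x0 ^ 2 + y0 ^ 2) + 1) - d (sqrt (x0 ^ 2 + y0 ^ 2))).
  assert (HK : 0 <= K)
    by (unfold K; destruct HC2 as [_ Hm]; assert (H := sqrt_pos (x0 ^ 2 + y0 ^ 2));
        assert (d (sqrt (x0 ^ 2 + y0 ^ 2)) <= d (sqrt (x0 ^ 2 + y0 ^ 2) + 1)) by (apply Hm; lra);
        lra).
  assert (Happrox : forall t, 0 < t -> 2 * t <= 1 -> - (2 * t * K) <= T).
  { intros t Ht Ht1.
    assert (Hin := D2_mixed_diff_open (x0 + t) (x0 + 1) (y0 + t) (y0 + 1) ltac:(lra) ltac:(lra)).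
    assert (D2 d x0 (y0 + 1) <= D2 d (x0 + t) (y0 + 1)) by (apply D2_mono; lra).
    assert (D2 d (x0 + 1) y0 <= D2 d (x0 + 1) (y0 + t)) by (apply D2_mono; lra).
    assert (Hdiag := D2_diag_step x0 y0 t Hx Hy ltac:(lra) Ht1). fold K in Hdiag.
    unfold T. lra. }
  destruct (Rle_dec 0 T) as [HT|HT]; [exact HT|exfalso].
  set (t := Rmin (1/2) (- T / (4 * (K + 1)))).
  assert (Ht : 0 < t) by (apply Rmin_glb_lt; [lra|apply Rdiv_lt_0_compat; lra]).
  assert (Ht1 : t <= 1/2) by apply Rmin_l.
  assert (HtT : t * (4 * (K + 1)) <= - T).
  { assert (Hr : t <= - T / (4 * (K + 1))) by apply Rmin_r.
    apply (Rmult_le_compat_r (4 * (K + 1))) in Hr; [|lra].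
    unfold Rdiv in Hr. rewrite Rmult_assoc, Rinv_l in Hr; lra. }
  assert (H := Happrox t Ht ltac:(lra)). nra.
Qed.

(* Triangle inequality for the lattice midpoint: [|(m+1,n)|] is at most the
   average of [|(m,n)|] and [|(m+2,n)|]. *)
Lemma norm_midpoint m n : 0 <= m -> 0 <= n ->
  2 * sqrt ((m + 1) ^ 2 + n ^ 2) <= sqrt (m ^ 2 + n ^ 2) + sqrt ((m + 2) ^ 2 + n ^ 2).
Proof.
  intros Hm Hn.
  set (a := sqrt (m ^ 2 + n ^ 2)). set (b := sqrt ((m + 1) ^ 2 + n ^ 2)).
  set (c := sqrt ((m + 2) ^ 2 + n ^ 2)).
  assert (Ha : a ^ 2 = m ^ 2 + n ^ 2) by (apply pow2_sqrt; nra).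
  assert (Hb : b ^ 2 = (m + 1) ^ 2 + n ^ 2) by (apply pow2_sqrt; nra).
  assert (Hc : c ^ 2 = (m + 2) ^ 2 + n ^ 2) by (apply pow2_sqrt; nra).
  assert (0 <= a) by apply sqrt_pos. assert (0 <= b) by apply sqrt_pos.
  assert (0 <= c) by apply sqrt_pos.
  (* Cauchy-Schwarz: [m(m+2) + n^2 <= a c] *)
  assert (Hac : m * (m + 2) + n ^ 2 <= a * c).
  { assert ((m * (m + 2) + n ^ 2) ^ 2 <= (a * c) ^ 2)
      by (replace ((a * c) ^ 2) with (a ^ 2 * c ^ 2) by ring; rewrite Ha, Hc; nra).
    assert (0 <= a * c) by (apply Rmult_le_pos; lra). nra. }
  nra.
Qed.

(* Along each axis the lattice increments of [d] are nondecreasing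
   (convexity) and each increment is nondecreasing in the other
   coordinate (nonnegative mixed differences). *)
Lemma Delta1_incr_m m n : Delta1 d m n <= Delta1 d (S m) n.
Proof.
  unfold Delta1, dd, D2. rewrite !S_INR.
  assert (Hm := pos_INR m). assert (Hn := pos_INR n).
  assert (H := convex_midpoint _ _ _ (sqrt_pos (INR m ^ 2 + INR n ^ 2))
     (sqrt_pos ((INR m + 1) ^ 2 + INR n ^ 2)) (sqrt_pos ((INR m + 1 + 1) ^ 2 + INR n ^ 2))
     ltac:(replace (INR m + 1 + 1) with (INR m + 2) by ring; apply norm_midpoint; lra)).
  lra.
Qed.

Lemma Delta2_incr_n m n : Delta2 d m n <= Delta2 d m (S n).
Proof.
  assert (H := Delta1_incr_m n m). unfold Delta1, Delta2, dd in *.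
  rewrite !(D2_comm (INR m)). exact H.
Qed.

Lemma Delta1_incr_n m n : Delta1 d m n <= Delta1 d m (S n).
Proof.
  unfold Delta1, dd. rewrite !S_INR.
  assert (H := D2_mixed_diff (INR m) (INR n) (pos_INR _) (pos_INR _)). lra.
Qed.

Lemma Delta2_incr_m m n : Delta2 d m n <= Delta2 d (S m) n.
Proof.
  unfold Delta2, dd. rewrite !S_INR.
  assert (H := D2_mixed_diff (INR m) (INR n) (pos_INR _) (pos_INR _)). lra.
Qed.

(* Consequently the placement set [P(h)] is an up-set of the lattice: once
   placing is triggered it stays triggered along every continuation. *)
Lemma inP_succ p q lam h m n : 0 <= q <= 1 -> inP d p q lam h m n ->
  inP d p q lam h (S m) n /\ inP d p q lam h m (S n).
Proof.
  intros Hq HP. unfold inP, Deltaq in *.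
  assert (H1 := Delta1_incr_m m n). assert (H2 := Delta2_incr_m m n).
  assert (H3 := Delta1_incr_n m n). assert (H4 := Delta2_incr_n m n).
  split; nra.
Qed.

End CostGeometry.

(* With [r = 1/(1+t)], Bernoulli's inequality gives
   [(1+t)^(3k) >= (k t)^3], so [r^(3k) (A + B (3k)^2) <= 9 (A+B) / (k t^3)]. *)
Lemma geom_quadratic_small r A B eps : 0 < r < 1 -> 0 <= A -> 0 <= B -> 0 < eps ->
  exists N, (1 <= N)%nat /\ r ^ N * (A + B * INR N ^ 2) < eps.
Proof.
  intros Hr HA HB He.
  set (t := / r - 1).
  assert (Ht : 0 < t).
  { unfold t. assert (1 < / r) by (rewrite <- Rinv_1; apply Rinv_lt_contravar; lra). lra. }
  assert (Ht3 : 0 < t ^ 3) by (apply pow_lt; lra).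
  destruct (archimed_cor1 (eps * t ^ 3 / (9 * (A + B) + 1))) as [k [Hk Hk0]].
  { apply Rdiv_lt_0_compat; [nra|lra]. }
  assert (Hkpos : 0 < INR k) by (apply lt_0_INR; lia).
  assert (Hkinv : 9 * (A + B) + 1 < eps * t ^ 3 * INR k).
  { apply (Rmult_lt_compat_r (INR k * (9 * (A + B) + 1))) in Hk; [|nra].
    replace (/ INR k * (INR k * (9 * (A + B) + 1))) with (9 * (A + B) + 1) in Hk
      by (field; lra).
    replace (eps * t ^ 3 / (9 * (A + B) + 1) * (INR k * (9 * (A + B) + 1)))
      with (eps * t ^ 3 * INR k) in Hk by (field; lra).
    exact Hk. }
  exists (3 * k)%nat. split; [lia|].
  set (X := r ^ (3 * k)).
  assert (HX : 0 < X) by (apply pow_lt; lra).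
  assert (Hinv : X * (1 + t) ^ (3 * k) = 1).
  { unfold X. rewrite <- Rpow_mult_distr. unfold t.
    replace (r * (1 + (/ r - 1))) with 1 by (field; lra). apply pow1. }
  assert (Hbern : (INR k * t) ^ 3 <= (1 + t) ^ (3 * k)).
  { rewrite Nat.mul_comm, pow_mult.
    assert (H := poly k t Ht). (* Bernoulli: 1 + k t <= (1+t)^k *)
    apply pow_incr. split; [nra|lra]. }
  assert (HN : INR (3 * k) = 3 * INR k) by (rewrite mult_INR; simpl; ring).
  rewrite HN.
  assert (Hquad : A + B * (3 * INR k) ^ 2 <= 9 * (A + B) * INR k ^ 2).
  { assert (1 <= INR k) by (apply (le_INR 1); lia).
    assert (1 <= INR k ^ 2) by nra. nra. }
  assert (HXk : X * (INR k * t) ^ 3 <= 1) by nra.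
  assert (X * (9 * (A + B) * INR k ^ 2) * (INR k * t ^ 3) <= 9 * (A + B)).
  { replace (X * (9 * (A + B) * INR k ^ 2) * (INR k * t ^ 3))
      with (9 * (A + B) * (X * (INR k * t) ^ 3)) by ring. nra. }
  assert (X * (9 * (A + B) * INR k ^ 2) < eps) by nra.
  nra.
Qed.

Lemma pow_unit_interval r K : 0 <= r <= 1 -> 0 <= r ^ K <= 1.
Proof. intros. split; [apply pow_le; lra|]. rewrite <- (pow1 K). apply pow_incr; lra. Qed.

Section Values.

Variables (d : R -> R) (p q lam : R).
Hypothesis hp : 0 < p < 1.
Hypothesis hq : 0 <= q <= 1.

Definition end_cost (k : nat) (m n : nat) : R :=
  match k with O => 0 | S _ => dd d m n end.

(* Expected cost of one step without placement from [(m,n)]: the agent moves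
   to [(m+1,n)] or [(m,n+1)], where the path ends (end cost [e]) or continues
   (continuation value [f]). *)
Definition next_cost (e f : nat -> nat -> R) (m n : nat) : R :=
  (1 - p) * q * f (S m) n + p * q * e (S m) n
  + (1 - p) * (1 - q) * f m (S n) + p * (1 - q) * e m (S n).

Lemma next_cost_mono e f g m n : (forall x y, f x y <= g x y) ->
  next_cost e f m n <= next_cost e g m n.
Proof.
  intros H. unfold next_cost. assert (H1 := H (S m) n). assert (H2 := H m (S n)).
  assert (0 <= (1 - p) * q) by nra. assert (0 <= (1 - p) * (1 - q)) by nra. nra.
Qed.

Lemma next_cost_mono_end e e' f m n : (forall x y, e x y <= e' x y) ->
  next_cost e f m n <= next_cost e' f m n.
Proof.
  intros H. unfold next_cost. assert (H1 := H (S m) n). assert (H2 := H m (S n)).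
  assert (0 <= p * q) by nra. assert (0 <= p * (1 - q)) by nra. nra.
Qed.

Lemma next_cost_shift e f g m n E : (forall x y, g x y - E <= f x y) ->
  next_cost e g m n - (1 - p) * E <= next_cost e f m n.
Proof.
  intros H. unfold next_cost. assert (H1 := H (S m) n). assert (H2 := H m (S n)).
  assert (0 <= (1 - p) * q) by nra. assert (0 <= (1 - p) * (1 - q)) by nra. nra.
Qed.

Lemma next_cost_nonneg e f m n : (forall x y, 0 <= e x y) -> (forall x y, 0 <= f x y) ->
  0 <= next_cost e f m n.
Proof.
  intros He Hf. unfold next_cost.
  assert (H1 := Hf (S m) n). assert (H2 := Hf m (S n)).
  assert (H3 := He (S m) n). assert (H4 := He m (S n)).
  assert (0 <= (1 - p) * q * f (S m) n) by (apply Rmult_le_pos; nra).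
  assert (0 <= (1 - p) * (1 - q) * f m (S n)) by (apply Rmult_le_pos; nra).
  assert (0 <= p * q * e (S m) n) by (apply Rmult_le_pos; nra).
  assert (0 <= p * (1 - q) * e m (S n)) by (apply Rmult_le_pos; nra).
  lra.
Qed.

Lemma next_cost_dd f m n : next_cost (dd d) f m n
  = (1 - p) * (q * f (S m) n + (1 - q) * f m (S n)) + p * (dd d m n + Deltaq d q m n).
Proof. unfold next_cost, Deltaq, Delta1, Delta2. ring. Qed.

Lemma mean_step_dd m n :
  q * dd d (S m) n + (1 - q) * dd d m (S n) = dd d m n + Deltaq d q m n.
Proof. unfold Deltaq, Delta1, Delta2. ring. Qed.

Lemma Vcost_Phi pi k hh : Vcost d p q lam pi k hh Phi = 0.
Proof. destruct k; reflexivity. Qed.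

Lemma Vcost_end pi k hh m n : Vcost d p q lam pi k hh (Node m n Ze) = end_cost k m n.
Proof. destruct k; simpl; [reflexivity|]. rewrite Vcost_Phi. ring. Qed.

Lemma Vcost_cont pi N hh m n :
  Vcost d p q lam pi (S N) hh (Node m n Zc) =
  pi hh (Node m n Zc) * (lam + dd d m n +
     next_cost (end_cost N)
       (fun a b => Vcost d p q lam pi N (hh ++ [(Node m n Zc, true)]) (Node a b Zc)) 0 0)
  + (1 - pi hh (Node m n Zc)) *
     next_cost (end_cost N)
       (fun a b => Vcost d p q lam pi N (hh ++ [(Node m n Zc, false)]) (Node a b Zc)) m n.
Proof. simpl. unfold next_cost. rewrite !Vcost_end. reflexivity. Qed.

Hypothesis hlam : 0 < lam.
Hypothesis HC2 : C2_convex_incr d.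
Hypothesis HC4 : C4_smooth d.

Lemma end_cost_le k m n : end_cost k m n <= dd d m n.
Proof. destruct k; simpl; [apply dd_nonneg; exact HC4|lra]. Qed.

Lemma mean_step_nonneg m n : 0 <= dd d m n + Deltaq d q m n.
Proof.
  rewrite <- mean_step_dd.
  assert (H1 := dd_nonneg d HC4 (S m) n). assert (H2 := dd_nonneg d HC4 m (S n)). nra.
Qed.

(* [opt_val N m n]: the optimal [N]-step cost from [(m,n,c)], computed by
   backward induction (placing resets the displacement to [(0,0)]). *)
Fixpoint opt_val (N : nat) (m n : nat) : R :=
  match N with
  | O => 0
  | S N' => Rmin (lam + dd d m n + next_cost (end_cost N') (opt_val N') 0 0)
                 (next_cost (end_cost N') (opt_val N') m n)
  end.

(* Optimal cost of the [N+1]-step problem from the start state. *)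
Definition opt_start (N : nat) : R := next_cost (end_cost N) (opt_val N) 0 0.

Lemma opt_val_le_Vcost pi : valid_policy pi ->
  forall N hh m n, opt_val N m n <= Vcost d p q lam pi N hh (Node m n Zc).
Proof.
  intros Hpi N. induction N as [|N IH]; intros hh m n; [simpl; lra|].
  rewrite Vcost_cont. simpl opt_val.
  set (u := pi hh (Node m n Zc)). assert (Hu : 0 <= u <= 1) by apply Hpi.
  assert (Hmin_place := Rmin_l (lam + dd d m n + next_cost (end_cost N) (opt_val N) 0 0)
                               (next_cost (end_cost N) (opt_val N) m n)).
  assert (Hmin_wait := Rmin_r (lam + dd d m n + next_cost (end_cost N) (opt_val N) 0 0)
                              (next_cost (end_cost N) (opt_val N) m n)).
  assert (Hplace := next_cost_mono (end_cost N) (opt_val N)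
     (fun a b => Vcost d p q lam pi N (hh ++ [(Node m n Zc, true)]) (Node a b Zc)) 0 0
     ltac:(intros; apply IH)).
  assert (Hwait := next_cost_mono (end_cost N) (opt_val N)
     (fun a b => Vcost d p q lam pi N (hh ++ [(Node m n Zc, false)]) (Node a b Zc)) m n
     ltac:(intros; apply IH)).
  nra.
Qed.

(* Every policy of total cost at most [c] bounds the optimal finite-horizon
   costs: never placing at the start is optimal since [lam + d(0,0) > 0]. *)
Lemma opt_start_le_total pi c : valid_policy pi -> total_cost_le d p q lam pi c ->
  forall N, opt_start N <= c.
Proof.
  intros Hpi Hc N.
  assert (H := opt_val_le_Vcost pi Hpi (S N) [] 0 0). assert (Hc' := Hc (S N)).
  unfold start in Hc'. simpl opt_val in H. fold (opt_start N) in H.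
  assert (Hd := dd_nonneg d HC4 0 0).
  rewrite Rmin_right in H by lra. lra.
Qed.

Section Threshold.

Variable h : R.
Hypothesis hh0 : 0 <= h.

(* [thr_val M K m n]: cost of following the threshold rule of [P(h)] for at
   most [K] decisions, where a placement is charged [lam + d + M] (instead of
   restarting) and truncation is charged as a placement with restart cost [h]. *)
Fixpoint thr_val (M : R) (K : nat) (m n : nat) : R :=
  match K with
  | O => lam + dd d m n + h
  | S K' => if Rle_dec (p * (lam + h)) (Deltaq d q m n) then lam + dd d m n + M
            else next_cost (dd d) (thr_val M K') m n
  end.

Lemma thr_val_inP M K m n : inP d p q lam h m n ->
  thr_val M (S K) m n = lam + dd d m n + M.
Proof. intros H. simpl. destruct Rle_dec; [reflexivity|contradiction]. Qed.

Lemma thr_val_notinP M K m n : ~ inP d p q lam h m n ->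
  thr_val M (S K) m n = next_cost (dd d) (thr_val M K) m n.
Proof. intros H. simpl. destruct Rle_dec; [contradiction|reflexivity]. Qed.

Lemma thr_val_h_inP K m n : inP d p q lam h m n -> thr_val h K m n = lam + dd d m n + h.
Proof. intros H. destruct K; [reflexivity|apply thr_val_inP, H]. Qed.

Lemma thr_val_nonneg M K m n : 0 <= M -> 0 <= thr_val M K m n.
Proof.
  intros HM. revert m n. induction K as [|K IH]; intros m n; simpl;
    assert (Hd := dd_nonneg d HC4 m n).
  - lra.
  - destruct Rle_dec; [lra|]. apply next_cost_nonneg; [apply dd_nonneg, HC4|exact IH].
Qed.

Lemma thr_val_mono_M M M' K m n : M <= M' -> thr_val M K m n <= thr_val M' K m n.
Proof.
  intros HM. revert m n. induction K as [|K IH]; intros m n; simpl; [lra|].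
  destruct Rle_dec; [lra|]. apply next_cost_mono, IH.
Qed.

(* For [M <= h] the truncated values decrease with the horizon: outside
   [P(h)] one more step costs less than placing now. *)
Lemma thr_val_succ_le M K m n : M <= h -> thr_val M (S K) m n <= thr_val M K m n.
Proof.
  intros HM. revert m n. induction K as [|K IH]; intros m n.
  - destruct (Rle_dec (p * (lam + h)) (Deltaq d q m n)) as [HP|HP].
    + rewrite thr_val_inP by exact HP. simpl. lra.
    + rewrite thr_val_notinP by exact HP. rewrite next_cost_dd. simpl.
      replace (q * (lam + dd d (S m) n + h) + (1 - q) * (lam + dd d m (S n) + h))
        with (lam + h + (dd d m n + Deltaq d q m n)) by (rewrite <- mean_step_dd; ring).
      apply Rnot_le_lt in HP. nra.
  - simpl. destruct Rle_dec; [lra|]. apply next_cost_mono, IH.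
Qed.

Lemma thr_val_le_place M K m n : M <= h -> thr_val M K m n <= lam + dd d m n + h.
Proof.
  intros HM. induction K as [|K IH]; [simpl; lra|].
  eapply Rle_trans; [apply thr_val_succ_le, HM|exact IH].
Qed.

Lemma thr_policy_cost_le M K0 : 0 <= M <= h ->
  next_cost (dd d) (thr_val M K0) 0 0 <= M ->
  forall N hh m n K,
    Vcost d p q lam (thr_policy d p q lam h) N hh (Node m n Zc) <= thr_val M K m n.
Proof.
  intros HM HK0 N. induction N as [|N IH]; intros hh m n K.
  { simpl. apply thr_val_nonneg; lra. }
  assert (Hnext : forall hh' a b K', next_cost (end_cost N)
      (fun x y => Vcost d p q lam (thr_policy d p q lam h) N hh' (Node x y Zc)) a b
      <= next_cost (dd d) (thr_val M K') a b).
  { intros hh' a b K'. eapply Rle_trans; [apply next_cost_mono_end, end_cost_le|].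
    apply next_cost_mono. intros; apply IH. }
  assert (Hsucc : forall K', Vcost d p q lam (thr_policy d p q lam h) (S N) hh (Node m n Zc)
                             <= thr_val M (S K') m n).
  { intros K'. rewrite Vcost_cont. unfold thr_policy at 1 3.
    destruct (Rle_dec (p * (lam + h)) (Deltaq d q m n)) as [HP|HP].
    - rewrite thr_val_inP by exact HP.
      assert (H := Hnext (hh ++ [(Node m n Zc, true)]) 0%nat 0%nat K0). lra.
    - rewrite thr_val_notinP by exact HP.
      assert (H := Hnext (hh ++ [(Node m n Zc, false)]) m n K'). lra. }
  destruct K as [|K]; [|apply Hsucc].
  eapply Rle_trans; [apply (Hsucc 0%nat)|apply thr_val_succ_le; lra].
Qed.

(* [stop_val N m n]: the optimal [N]-step cost of the stopping problem in
   which placing a relay ends the problem at cost [lam + h + d(m,n)]. *)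
Fixpoint stop_val (N : nat) (m n : nat) : R :=
  match N with
  | O => 0
  | S N' => Rmin (lam + h + dd d m n) (next_cost (end_cost N') (stop_val N') m n)
  end.

Lemma stop_val_succ N m n : stop_val (S N) m n
  = Rmin (lam + h + dd d m n) (next_cost (end_cost N) (stop_val N) m n).
Proof. reflexivity. Qed.

Lemma stop_val_one m n : stop_val 1 m n = 0.
Proof.
  simpl. unfold next_cost. simpl.
  assert (Hd := dd_nonneg d HC4 m n). rewrite Rmin_right; [ring|lra].
Qed.

(* Truncation error of the threshold rule: the probability [(1-p)^K] that the
   path survives [K] steps, times a bound on the cost still at stake. *)
Definition trunc_err (K : nat) (m n : nat) : R :=
  (1 - p) ^ K * (dd d m n + (1 + INR K * p) * (lam + h)).

Lemma trunc_err_nonneg K m n : 0 <= trunc_err K m n.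
Proof.
  unfold trunc_err. assert (HP := pow_unit_interval (1 - p) K ltac:(lra)).
  assert (Hd := dd_nonneg d HC4 m n). assert (HK := pos_INR K).
  apply Rmult_le_pos; [lra|]. assert (0 <= INR K * p) by nra. nra.
Qed.

Lemma next_cost_trunc_lower f g K m n :
  (forall x y, g x y - trunc_err K x y <= f x y) ->
  next_cost (dd d) g m n
    - (1 - p) * (1 - p) ^ K * (dd d m n + Deltaq d q m n + (1 + INR K * p) * (lam + h))
  <= next_cost (dd d) f m n.
Proof.
  intros H. rewrite !next_cost_dd. unfold trunc_err in H.
  assert (H1 := H (S m) n). assert (H2 := H m (S n)).
  assert (Hmean : q * g (S m) n + (1 - q) * g m (S n)
                  - (1 - p) ^ K * (dd d m n + Deltaq d q m n + (1 + INR K * p) * (lam + h))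
                  <= q * f (S m) n + (1 - q) * f m (S n)).
  { rewrite <- mean_step_dd. nra. }
  nra.
Qed.

(* The threshold rule is near-optimal for the stopping problem: its truncated
   value exceeds the optimal one by at most the truncation error.  In [P(h)]
   this uses that [P(h)] is an up-set (placing stays optimal), outside [P(h)]
   that continuing is cheaper than placing. *)
Lemma thr_val_le_stop_val K m n :
  thr_val h (S K) m n - trunc_err K m n <= stop_val (S K) m n.
Proof.
  revert m n. induction K as [|K IH]; intros m n.
  { rewrite stop_val_one. assert (H := thr_val_le_place h 1 m n (Rle_refl h)).
    unfold trunc_err. rewrite pow_O. simpl INR. lra. }
  assert (Herr : trunc_err (S K) m n = (1 - p) * (1 - p) ^ K *
                   (dd d m n + (1 + INR K * p) * (lam + h) + p * (lam + h)))
    by (unfold trunc_err; rewrite S_INR; simpl; ring).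
  assert (HP := pow_unit_interval (1 - p) K ltac:(lra)).
  assert (Hlow := next_cost_trunc_lower _ _ K m n IH).
  rewrite stop_val_succ. apply Rmin_glb.
  { assert (H := thr_val_le_place h (S (S K)) m n (Rle_refl h)).
    assert (H0 := trunc_err_nonneg (S K) m n). lra. }
  destruct (Rle_dec (p * (lam + h)) (Deltaq d q m n)) as [HPm|HPm].
  - destruct (inP_succ d HC2 HC4 p q lam h m n hq HPm) as [HP1 HP2].
    assert (Hmean : q * thr_val h (S K) (S m) n + (1 - q) * thr_val h (S K) m (S n)
                    = lam + h + (dd d m n + Deltaq d q m n)).
    { rewrite (thr_val_h_inP (S K) _ _ HP1), (thr_val_h_inP (S K) _ _ HP2).
      rewrite <- mean_step_dd. ring. }
    rewrite thr_val_inP by exact HPm. rewrite next_cost_dd, Hmean in Hlow.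
    assert (0 <= (1 - (1 - p) * (1 - p) ^ K) * (Deltaq d q m n - p * (lam + h)))
      by (apply Rmult_le_pos; nra).
    change (end_cost (S K)) with (dd d). rewrite Herr. lra.
  - rewrite thr_val_notinP by exact HPm. change (end_cost (S K)) with (dd d).
    rewrite Herr.
    assert (0 <= (1 - p) * (1 - p) ^ K * (p * (lam + h) - Deltaq d q m n))
      by (apply Rmult_le_pos; nra).
    lra.
Qed.

(* [restart_err N]: accumulated error from charging the restart cost [h]
   instead of the optimal restart cost [opt_start]. *)
Fixpoint restart_err (N : nat) : R :=
  match N with
  | O => 0
  | S N' => Rmax (h - opt_start N') ((1 - p) * restart_err N')
  end.

Lemma stop_val_le_opt_val N m n : stop_val N m n - restart_err N <= opt_val N m n.
Proof.
  revert m n. induction N as [|N IH]; intros m n; [simpl; lra|].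
  rewrite stop_val_succ. simpl opt_val. simpl restart_err. fold (opt_start N).
  assert (H := next_cost_shift (end_cost N) (opt_val N) (stop_val N) m n
                 (restart_err N) ltac:(intros; apply IH)).
  assert (M1 := Rmax_l (h - opt_start N) ((1 - p) * restart_err N)).
  assert (M2 := Rmax_r (h - opt_start N) ((1 - p) * restart_err N)).
  assert (R1 := Rmin_l (lam + h + dd d m n) (next_cost (end_cost N) (stop_val N) m n)).
  assert (R2 := Rmin_r (lam + h + dd d m n) (next_cost (end_cost N) (stop_val N) m n)).
  unfold opt_start in *. apply Rmin_glb; lra.
Qed.

Lemma opt_start_lower
  (Hhigh : forall K, h <= next_cost (dd d) (thr_val h K) 0 0) K :
  h - (1 - p) * (1 - p) ^ K * (dd d 0 0 + Deltaq d q 0 0 + (1 + INR K * p) * (lam + h))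
    - (1 - p) * restart_err (S K)
  <= opt_start (S K).
Proof.
  unfold opt_start. change (end_cost (S K)) with (dd d).
  assert (H1 := next_cost_shift (dd d) (opt_val (S K)) (stop_val (S K)) 0 0
                  (restart_err (S K)) (stop_val_le_opt_val (S K))).
  assert (H2 := next_cost_trunc_lower (stop_val (S K)) (thr_val h (S K)) K 0 0
                  (thr_val_le_stop_val K)).
  assert (H3 := Hhigh (S K)). lra.
Qed.

Lemma restart_err_bound
  (Hhigh : forall K, h <= next_cost (dd d) (thr_val h K) 0 0) K :
  restart_err (S K)
  <= (1 - p) ^ K * (h + (dd d 0 0 + Deltaq d q 0 0 + lam + h) * INR K ^ 2).
Proof.
  set (D1 := dd d 0 0 + Deltaq d q 0 0).
  assert (HD1 : 0 <= D1) by apply mean_step_nonneg.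
  induction K as [|K IH].
  { simpl restart_err. unfold opt_start, next_cost. simpl.
    apply Rmax_lub; lra. }
  change (restart_err (S (S K))) with
    (Rmax (h - opt_start (S K)) ((1 - p) * restart_err (S K))).
  assert (HP := pow_unit_interval (1 - p) K ltac:(lra)).
  assert (HK := pos_INR K). rewrite S_INR.
  change ((1 - p) ^ S K) with ((1 - p) * (1 - p) ^ K).
  assert (Hsq : 0 <= (D1 + lam + h) * (2 * INR K + 1)) by (apply Rmult_le_pos; lra).
  assert (Hgrow : h + (D1 + lam + h) * INR K ^ 2
                  <= h + (D1 + lam + h) * (INR K + 1) ^ 2) by nra.
  assert (HKp : 0 <= INR K * ((2 - p) * (lam + h) + 2 * D1))
    by (apply Rmult_le_pos; nra).
  assert (Hgrow' : D1 + (1 + INR K * p) * (lam + h) + (h + (D1 + lam + h) * INR K ^ 2)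
                   <= h + (D1 + lam + h) * (INR K + 1) ^ 2) by nra.
  assert (HPc : 0 <= (1 - p) * (1 - p) ^ K) by nra.
  apply Rmax_lub.
  - assert (H := opt_start_lower Hhigh K). fold D1 in H.
    assert (H1 := Rmult_le_compat_l (1 - p) _ _ ltac:(lra) IH).
    assert (H2 := Rmult_le_compat_l _ _ _ HPc Hgrow'). nra.
  - assert (H1 := Rmult_le_compat_l (1 - p) _ _ ltac:(lra) IH).
    assert (H2 := Rmult_le_compat_l _ _ _ HPc Hgrow). nra.
Qed.

Lemma thr_val_start_below c : c < h -> (forall N, opt_start N <= c) ->
  exists K, next_cost (dd d) (thr_val h K) 0 0 < h.
Proof.
  intros Hch Hc. apply NNPP. intros Hnone.
  assert (Hhigh : forall K, h <= next_cost (dd d) (thr_val h K) 0 0)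
    by (intros K; apply Rnot_lt_le; intros HK; apply Hnone; exists K; exact HK).
  set (B := dd d 0 0 + Deltaq d q 0 0 + lam + h).
  assert (HB : 0 <= B) by (assert (H := mean_step_nonneg 0 0); unfold B; lra).
  destruct (geom_quadratic_small (1 - p) h B (h - c) ltac:(lra) hh0 HB ltac:(lra))
    as [[|K] [HK1 HK]]; [lia|].
  assert (Hbound := restart_err_bound Hhigh (S K)).
  assert (Hmax := Rmax_l (h - opt_start (S K)) ((1 - p) * restart_err (S K))).
  change (Rmax (h - opt_start (S K)) ((1 - p) * restart_err (S K)))
    with (restart_err (S (S K))) in Hmax.
  assert (Hc' := Hc (S K)). fold B in Hbound. lra.
Qed.

(* A threshold value below [h] after a restart forces [(0,0)] outside [P(h)]:
   inside [P(h)] every successor is in [P(h)] and the value is at least [lam + h]. *)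
Lemma start_notin_P K : next_cost (dd d) (thr_val h K) 0 0 < h ->
  ~ inP d p q lam h 0 0.
Proof.
  intros HK HP. destruct (inP_succ d HC2 HC4 p q lam h 0 0 hq HP) as [HP1 HP2].
  rewrite next_cost_dd, (thr_val_h_inP K _ _ HP1), (thr_val_h_inP K _ _ HP2) in HK.
  assert (Hmean : q * (lam + dd d 1 0 + h) + (1 - q) * (lam + dd d 0 1 + h)
                  = lam + h + (dd d 0 0 + Deltaq d q 0 0))
    by (rewrite <- mean_step_dd; ring).
  rewrite Hmean in HK. unfold inP in HP.
  assert (H0 := dd_nonneg d HC4 0 0). nra.
Qed.

(* If the threshold value [M] after a restart is below [h], it bounds the
   total cost of the threshold policy from the start: the policy does not
   place at [(0,0)], and [M] is a self-consistent restart cost. *)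
Lemma thr_policy_start_cost K0 : next_cost (dd d) (thr_val h K0) 0 0 < h ->
  total_cost_le d p q lam (thr_policy d p q lam h) (next_cost (dd d) (thr_val h K0) 0 0).
Proof.
  intros HK0. set (M := next_cost (dd d) (thr_val h K0) 0 0) in *.
  assert (HM0 : 0 <= M)
    by (apply next_cost_nonneg; [apply dd_nonneg, HC4|intros; apply thr_val_nonneg, hh0]).
  assert (HMfix : next_cost (dd d) (thr_val M K0) 0 0 <= M)
    by (apply next_cost_mono; intros; apply thr_val_mono_M; lra).
  assert (Hstart : thr_policy d p q lam h [] (Node 0 0 Zc) = 0).
  { assert (HnP := start_notin_P K0 HK0). unfold thr_policy.
    destruct Rle_dec; [contradiction|reflexivity]. }
  intros [|N]; [simpl; exact HM0|].
  unfold start. rewrite Vcost_cont, Hstart.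
  assert (H : next_cost (end_cost N) (fun a b => Vcost d p q lam (thr_policy d p q lam h) N
                ([] ++ [(Node 0 0 Zc, false)]) (Node a b Zc)) 0 0
              <= next_cost (dd d) (thr_val M K0) 0 0).
  { eapply Rle_trans; [apply next_cost_mono_end, end_cost_le|].
    apply next_cost_mono. intros; apply (thr_policy_cost_le M K0); lra. }
  lra.
Qed.

End Threshold.

End Values.

Theorem lemma3 (d : R -> R) (p q lam : R)
  (hp : 0 < p < 1) (hq : 0 <= q <= 1) (hlam : 0 < lam)
  (C1 : 0 < d 0) (C2 : C2_convex_incr d) (C3 : C3_incr_diff d)
  (C4 : C4_smooth d)
  (h : R) (hgt : gstar_lt d p q lam h) :
  g_lt d p q lam h.
Proof.
  destruct hgt as [pi [Hpi [c [Hch Hc]]]].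
  assert (Hh : 0 <= h) by (assert (H := Hc 0%nat); simpl in H; lra).
  assert (Hopt := opt_start_le_total d p q lam hp hq hlam C4 pi c Hpi Hc).
  destruct (thr_val_start_below d p q lam hp hq hlam C2 C4 h Hh c Hch Hopt) as [K0 HK0].
  exists (next_cost p q (dd d) (thr_val d p q lam h h K0) 0 0).
  split; [exact HK0|].
  exact (thr_policy_start_cost d p q lam hp hq hlam C2 C4 h Hh K0 HK0).
Qed.
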